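(* Let $P, A, B, C$ be points in the Euclidean plane, let $r>0$ and let $Z=\{Q:|PQ|\le r\}$. Let $P^*\in Z$ be a solution of the Max-Min-Angle problem, i.e. a point of $Z$ maximizing, over $Q\in Z$, the smallest of the angles $\angle AQB,\angle BQC,\angle CQA$ (non-reflex angles in $[0,\pi]$). Suppose there are exactly two smallest angles around $P^*$, i.e. among the three angles between consecutive rays $P^*A,P^*B,P^*C$ (in counterclockwise order), two are equal and strictly smaller than the third. Then $P^*$ can be computed by solving a polynomial equation of degree at most four; that is, the coordinates of $P^*$ can be obtained from the coordinates of $P,A,B,C$ and from $r$ by finitely many field operations, square roots, and taking a root of a polynomial of degree at most four.
   Context: This is the Max-Min-Angle problem for a graph vertex of degree three: $P$ is the current position of the vertex, $A,B,C$ the positions of its neighbours, and the vertex may be moved to any point at distance at most $r$ from $P$, the aim being to maximize the smallest angle between incident edges. *)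

From HB Require Import structures.
From mathcomp Require Import all_boot all_order all_algebra.
From mathcomp Require Import reals trigo.
Set Implicit Arguments. Unset Strict Implicit. Unset Printing Implicit Defensive.
Import Order.TTheory GRing.Theory Num.Theory.
Local Open Scope ring_scope.

Section Defs.
Variable R : realType.
Notation pt := (R * R)%type.

Definition vsub (X Q : pt) : pt := (X.1 - Q.1, X.2 - Q.2).
Definition dot (u v : pt) : R := u.1 * v.1 + u.2 * v.2.
Definition cross (u v : pt) : R := u.1 * v.2 - u.2 * v.1.
Definition vnorm (u : pt) : R := Num.sqrt (dot u u).
Definition dist (X Y : pt) : R := vnorm (vsub Y X).

(* Non-reflex angle XQY in [0, pi]; convention: 0 if Q = X or Q = Y
   (the angle is then undefined). *)
Definition angle (Q X Y : pt) : R :=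
  let u := vsub X Q in let v := vsub Y Q in
  if (vnorm u == 0) || (vnorm v == 0) then 0
  else acos (dot u v / (vnorm u * vnorm v)).

Definition min_angle (Q A B C : pt) : R :=
  Num.min (angle Q A B) (Num.min (angle Q B C) (angle Q C A)).

Definition in_disk (P : pt) (r : R) (Q : pt) : Prop := dist P Q <= r.

Definition is_MMA_solution (P : pt) (r : R) (A B C Pstar : pt) : Prop :=
  in_disk P r Pstar /\
  forall Q, in_disk P r Q -> min_angle Q A B C <= min_angle Pstar A B C.

Definition ccw_angle (Q X Y : pt) : R :=
  if 0 <= cross (vsub X Q) (vsub Y Q) then angle Q X Y
  else 2 * pi - angle Q X Y.

(* the three angles between consecutive rays QA, QB, QC in ccw order
   (they sum to 2 pi) *)
Definition consecutive_angles (Q A B C : pt) : R * R * R :=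
  if ccw_angle Q A B + ccw_angle Q B C + ccw_angle Q C A == 2 * pi
  then (ccw_angle Q A B, ccw_angle Q B C, ccw_angle Q C A)
  else (ccw_angle Q A C, ccw_angle Q C B, ccw_angle Q B A).

Definition exactly_two_smallest (Q A B C : pt) : Prop :=
  [/\ Q <> A, Q <> B, Q <> C &
    let: (g1, g2, g3) := consecutive_angles Q A B C in
    (g1 = g2 /\ g1 < g3) \/ (g2 = g3 /\ g2 < g1) \/ (g3 = g1 /\ g3 < g2)].

(* gen S x : x lies in the subfield of R generated (over Q) by the list S *)
Inductive gen (S : seq R) : R -> Prop :=
| gen_mem x : x \in S -> gen S x
| gen_one : gen S 1
| gen_sub x y : gen S x -> gen S y -> gen S (x - y)
| gen_mul x y : gen S x -> gen S y -> gen S (x * y)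
| gen_inv x : gen S x -> gen S x^-1.

(* tower S xs q : the numbers xs are obtained successively from the field
   generated by S, each one being either the square root of a nonnegative
   element of the current field, or (only if q = true, and then only once)
   a root of a nonzero polynomial of degree at most four with coefficients
   in the current field. *)
Fixpoint tower (S : seq R) (xs : seq R) (q : bool) : Prop :=
  match xs with
  | [::] => True
  | x :: xs' =>
      ((exists y, [/\ gen S y, 0 <= y & x = Num.sqrt y]) /\ tower (rcons S x) xs' q)
      \/ (q /\ (exists p : {poly R},
             [/\ p != 0, (size p <= 5)%N, (forall i, gen S p`_i) & root p x])
           /\ tower (rcons S x) xs' false)
  end.

Definition computable_deg4 (data : seq R) (X : pt) : Prop :=
  exists xs : seq R, [/\ tower data xs true, gen (data ++ xs) X.1 & gen (data ++ xs) X.2].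

End Defs.

From mathcomp Require Import all_boot all_order all_algebra.
From mathcomp Require Import reals trigo.
From mathcomp Require Import ring lra.
Import Order.TTheory GRing.Theory Num.Theory.
Local Open Scope ring_scope.
Set Implicit Arguments. Unset Strict Implicit. Unset Printing Implicit Defensive.

(* At an optimal point [Q0] with two equal smallest angles [XQ0Y = YQ0Z], [Q0]
   must lie on the boundary circle, and [Y] outside the disk: otherwise moving
   [Q0] slightly towards the middle neighbour [Y] widens both smallest angles
   at once and keeps the third one larger.  The equality of the two angles is
   a cubic curve through [Y]; after an inversion centred at [Y] it becomes a
   conic and the boundary circle stays a circle.  Intersecting the two gives a
   quartic in the first coordinate, and the second one follows by a square
   root. *)

Section Vectors.
Variable R : realType.
Implicit Types (u v w Q X Y : R * R).

Lemma dot_ge0 u : 0 <= dot u u.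
Proof. rewrite /dot; nra. Qed.

Lemma vnorm_sqr u : vnorm u ^+ 2 = dot u u.
Proof. by rewrite /vnorm sqr_sqrtr // dot_ge0. Qed.

Lemma vnorm_gt0 u : 0 < dot u u -> 0 < vnorm u.
Proof. by move=> h; rewrite /vnorm sqrtr_gt0. Qed.

Lemma vnormM u v : vnorm u * vnorm v = Num.sqrt (dot u u * dot v v).
Proof. by rewrite /vnorm sqrtrM // dot_ge0. Qed.

Lemma dot_cross_sqr u v : dot u v ^+ 2 + cross u v ^+ 2 = dot u u * dot v v.
Proof. rewrite /dot /cross; ring. Qed.

Lemma cross_gt0_dot_gt0 u v : 0 < cross u v -> 0 < dot u u /\ 0 < dot v v.
Proof.
move=> h; have := dot_cross_sqr u v; have := dot_ge0 u; have := dot_ge0 v.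
move: (dot u u) (dot v v) (dot u v) (cross u v) h => A B D C h hb ha e.
split; nra.
Qed.

Lemma dot_vsub_gt0 Q X : Q <> X -> 0 < dot (vsub X Q) (vsub X Q).
Proof.
move=> hne; rewrite lt_def dot_ge0 andbT; apply/eqP => h; apply: hne.
move: h; rewrite /dot /vsub /= => /eqP; rewrite paddr_eq0 -?expr2 ?sqr_ge0 //.
rewrite !sqrf_eq0 !subr_eq0 => /andP[/eqP h1 /eqP h2].
by case: Q X h1 h2 => [q1 q2] [x1 x2] /= -> ->.
Qed.

Definition cosv u v := dot u v / (vnorm u * vnorm v).
Definition sinv u v := cross u v / (vnorm u * vnorm v).

Lemma dot_cosv u v : 0 < dot u u -> 0 < dot v v -> dot u v = cosv u v * (vnorm u * vnorm v).
Proof. by move=> hu hv; rewrite divfK // mulf_neq0 // gt_eqF // vnorm_gt0. Qed.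

Lemma cross_sinv u v : 0 < dot u u -> 0 < dot v v -> cross u v = sinv u v * (vnorm u * vnorm v).
Proof. by move=> hu hv; rewrite divfK // mulf_neq0 // gt_eqF // vnorm_gt0. Qed.

Lemma cosv_sinv_sqr u v : 0 < dot u u -> 0 < dot v v ->
  cosv u v ^+ 2 + sinv u v ^+ 2 = 1.
Proof.
move=> hu hv; rewrite /cosv /sinv !expr_div_n -mulrDl dot_cross_sqr exprMn.
by rewrite !vnorm_sqr divff // mulf_neq0 // gt_eqF.
Qed.

Lemma cosvC u v : cosv v u = cosv u v.
Proof. rewrite /cosv [vnorm v * _]mulrC; congr (_ / _); rewrite /dot; ring. Qed.

Lemma sinvC u v : sinv v u = - sinv u v.
Proof. rewrite /sinv [vnorm v * _]mulrC -mulNr; congr (_ / _); rewrite /cross; ring. Qed.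

Lemma cosv_sinv_chain u v w : 0 < dot u u -> 0 < dot v v -> 0 < dot w w ->
  cosv u w = cosv u v * cosv v w - sinv u v * sinv v w /\
  sinv u w = cosv u v * sinv v w + sinv u v * cosv v w.
Proof.
move=> hu hv hw.
have nu := vnorm_gt0 hu; have nv := vnorm_gt0 hv; have nw := vnorm_gt0 hw.
have dv : vnorm v ^+ 2 != 0 by rewrite vnorm_sqr gt_eqF.
have ec : dot u w * vnorm v ^+ 2 = dot u v * dot v w - cross u v * cross v w.
  by rewrite vnorm_sqr /dot /cross; ring.
have es : cross u w * vnorm v ^+ 2 = dot u v * cross v w + cross u v * dot v w.
  by rewrite vnorm_sqr /dot /cross; ring.
rewrite /cosv /sinv -[dot u w](mulfK dv) -[cross u w](mulfK dv) ec es.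
by split; field; rewrite !gt_eqF.
Qed.

Lemma sinv_ge0E u v : 0 < dot u u -> 0 < dot v v -> (0 <= sinv u v) = (0 <= cross u v).
Proof. by move=> hu hv; rewrite /sinv pmulr_lge0 // invr_gt0 mulr_gt0 // vnorm_gt0. Qed.

Lemma sinv_gt0E u v : 0 < dot u u -> 0 < dot v v -> (0 < sinv u v) = (0 < cross u v).
Proof. by move=> hu hv; rewrite /sinv pmulr_lgt0 // invr_gt0 mulr_gt0 // vnorm_gt0. Qed.

Lemma angleC Q X Y : angle Q X Y = angle Q Y X.
Proof.
rewrite /angle orbC; case: ifP => // _.
by rewrite [vnorm (vsub Y Q) * _]mulrC /dot [_.1 * _]mulrC [_.2 * (vsub X Q).2]mulrC.
Qed.

End Vectors.

Section CcwOf.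
Variable R : realType.
Implicit Types c s : R.

Lemma unit_cos_bound c s : c ^+ 2 + s ^+ 2 = 1 -> -1 <= c <= 1.
Proof. by move=> h; apply/andP; split; nra. Qed.

Lemma acos_ltE c1 c2 : -1 <= c1 <= 1 -> -1 <= c2 <= 1 -> (acos c1 < acos c2) = (c2 < c1).
Proof. by move=> h1 h2; rewrite -ltr_cos ?acosK ?in_itv //= ?acos_ge0 ?acos_lepi. Qed.

Lemma acos_inj c1 c2 : -1 <= c1 <= 1 -> -1 <= c2 <= 1 -> acos c1 = acos c2 -> c1 = c2.
Proof. by move=> h1 h2 e; rewrite -(acosK (x:=c1)) ?in_itv //= e acosK ?in_itv. Qed.

Lemma acos_eq_pi_sin0 c s : c ^+ 2 + s ^+ 2 = 1 -> acos c = pi -> s = 0.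
Proof.
move=> h e; have /andP[c1 c2] := unit_cos_bound h.
have ec : c = -1.
  case: (ltrgtP c (-1)) => // hc; first lra.
  by have := @acos_ltpi R c (ltac:(lra)); rewrite e ltxx.
apply/eqP; rewrite -sqrf_eq0; apply/eqP; move: h; rewrite ec; lra.
Qed.

Definition ccw_of c s : R := if 0 <= s then acos c else 2 * pi - acos c.

Lemma ccw_of_inj c1 s1 c2 s2 : c1 ^+ 2 + s1 ^+ 2 = 1 -> c2 ^+ 2 + s2 ^+ 2 = 1 ->
  ccw_of c1 s1 = ccw_of c2 s2 -> c1 = c2 /\ s1 = s2.
Proof.
move=> h1 h2; have b1 := unit_cos_bound h1; have b2 := unit_cos_bound h2.
have [a1 a1'] := (acos_ge0 b1, acos_lepi b1); have [a2 a2'] := (acos_ge0 b2, acos_lepi b2).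
have pi0 := pi_gt0 R.
have sqrE : c1 = c2 -> s1 ^+ 2 = s2 ^+ 2 by move=> ec; move: h1; rewrite ec; lra.
rewrite /ccw_of; case: (lerP 0 s1) => hs1; case: (lerP 0 s2) => hs2 e.
- have ec := acos_inj b1 b2 e.
  by split=> //; apply: (pexpIrn (n := 2)); rewrite ?nnegrE ?sqrE.
- have := acos_eq_pi_sin0 h2 (ltac:(lra)); lra.
- have := acos_eq_pi_sin0 h1 (ltac:(lra)); lra.
- have ec := acos_inj b1 b2 (ltac:(lra)).
  split=> //; apply: oppr_inj; apply: (pexpIrn (n := 2)); rewrite ?nnegrE ?sqrrN ?sqrE //; lra.
Qed.

(* If the ccw angles from [u] to [v] and from [v] to [w] both have cosine [c]
   and sine [s], the one from [w] back to [u] has cosine [c ^+ 2 - s ^+ 2] and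
   sine [- (2 * c * s)].  The disjunction says that these three angles, rather
   than the ones of the reverse orientation, sum to [2 * pi]. *)
Lemma ccw_of_twice_gt c s : c ^+ 2 + s ^+ 2 = 1 ->
  let c2 := c ^+ 2 - s ^+ 2 in let s2 := - (2 * c * s) in
  ccw_of c s < ccw_of c2 s2 ->
  ccw_of c s + ccw_of c s + ccw_of c2 s2 = 2 * pi \/
    ccw_of c2 (- s2) + ccw_of c (- s) + ccw_of c (- s) != 2 * pi ->
  0 < s /\ c2 < c.
Proof.
move=> h c2 s2 lt hsum.
have h2 : c2 ^+ 2 + s2 ^+ 2 = 1.
  by rewrite -[RHS](expr1n _ 2) -h /c2 /s2; ring.
have b := unit_cos_bound h; have b2 := unit_cos_bound h2.
have [a a'] := (acos_ge0 b, acos_lepi b); have [a2 a2'] := (acos_ge0 b2, acos_lepi b2).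
have pi0 := pi_gt0 R.
have ec2 : c2 = 2 * c ^+ 2 - 1 by rewrite /c2; lra.
move: lt hsum; rewrite /ccw_of.
case: (ltrgtP s 0) => hs.
- move=> /= lt hsum; exfalso.
  have hs2 : s2 < 0 by case: (ltP s2 0) => // hs2; move: lt; rewrite hs2; lra.
  have hc : c < 0 by move: hs2; rewrite /s2; nra.
  rewrite (leNgt 0 s2) hs2 /= in lt hsum.
  case: hsum; first lra.
  rewrite !oppr_ge0 (ltW hs) (ltW hs2) /=.
  have hpi2 : pi / 2 < acos c by rewrite -acos0 acos_ltE //; lra.
  have -> : acos c2 = 2 * pi - 2 * acos c.
    have hy : - pi <= 2 * acos c - 2 * pi <= 0 by apply/andP; split; lra.
    have <- : cos (2 * acos c - 2 * pi) = c2.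
      rewrite -[LHS](cosD2pi (2 * acos c - 2 * pi)).
      have -> : 2 * acos c - 2 * pi + pi *+ 2 = (acos c) *+ 2 by ring.
      by rewrite cos_mulr2n acosK ?in_itv //= ec2; ring.
    by rewrite cosKN //; ring.
  by move=> /eqP; apply; ring.
- move=> lt _; split=> //.
  case: (lerP 0 s2) => hs2 in lt.
    by rewrite -acos_ltE.
  have hc : 0 < c by move: hs2; rewrite /s2; nra.
  have hc1 : c < 1 by have := exprn_gt0 2 hs; nra.
  rewrite ec2; nra.
- move=> lt _; exfalso.
  have ec : c2 = 1 by move: h; rewrite /c2 hs expr0n /= addr0 subr0.
  move: lt; rewrite /s2 hs mulr0 oppr0 lexx ec acos1; lra.
Qed.

End CcwOf.

Section Angles.
Variable R : realType.
Implicit Types Q X Y Z : R * R.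

Lemma angleE Q X Y : 0 < dot (vsub X Q) (vsub X Q) -> 0 < dot (vsub Y Q) (vsub Y Q) ->
  angle Q X Y = acos (cosv (vsub X Q) (vsub Y Q)).
Proof. by move=> hx hy; rewrite /angle /= !gt_eqF ?vnorm_gt0. Qed.

Lemma ccw_angleE Q X Y : 0 < dot (vsub X Q) (vsub X Q) -> 0 < dot (vsub Y Q) (vsub Y Q) ->
  ccw_angle Q X Y = ccw_of (cosv (vsub X Q) (vsub Y Q)) (sinv (vsub X Q) (vsub Y Q)).
Proof. by move=> hx hy; rewrite /ccw_angle /ccw_of angleE // sinv_ge0E. Qed.

Lemma two_equal_ccw_angles Q X Y Z : Q <> X -> Q <> Y -> Q <> Z ->
  ccw_angle Q X Y = ccw_angle Q Y Z -> ccw_angle Q X Y < ccw_angle Q Z X ->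
  ccw_angle Q X Y + ccw_angle Q Y Z + ccw_angle Q Z X = 2 * pi \/
    ccw_angle Q X Z + ccw_angle Q Z Y + ccw_angle Q Y X != 2 * pi ->
  let u := vsub X Q in let v := vsub Y Q in let w := vsub Z Q in
  [/\ 0 < cross u v, 0 < cross v w, cosv u v = cosv v w, sinv u v = sinv v w
    & cosv w u < cosv u v].
Proof.
move=> nX nY nZ; have hu := dot_vsub_gt0 nX; have hv := dot_vsub_gt0 nY.
have hw := dot_vsub_gt0 nZ; rewrite !ccw_angleE //.
set u := vsub X Q in hu *; set v := vsub Y Q in hv *; set w := vsub Z Q in hw *.
move=> e lt hsum.
have [ec es] := ccw_of_inj (cosv_sinv_sqr hu hv) (cosv_sinv_sqr hv hw) e.
have [cw sw] : cosv w u = cosv u v ^+ 2 - sinv u v ^+ 2 /\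
    sinv w u = - (2 * cosv u v * sinv u v).
  rewrite (cosvC u w) (sinvC u w); have [-> ->] := cosv_sinv_chain hu hv hw.
  by rewrite -ec -es; split; ring.
move: lt hsum; rewrite (cosvC w u) (sinvC w u) (cosvC v w) (sinvC v w).
rewrite (cosvC u v) (sinvC u v) cw sw -ec -es => lt hsum.
have [hs hc] := ccw_of_twice_gt (cosv_sinv_sqr hu hv) lt hsum.
by split; rewrite // ?cw // -sinv_gt0E // -es.
Qed.

End Angles.

Section NearZero.
Variable R : realType.

Lemma poly_lipschitz0 (p : {poly R}) :
  exists2 M, 0 <= M & forall e, 0 <= e <= 1 -> `|p.[e] - p.[0]| <= M * e.
Proof.
elim/poly_ind: p => [|p c [M M0 HM]].
  by exists 0 => // e _; rewrite !horner0 subrr normr0 mul0r.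
exists (`|p.[0]| + M) => [|e /andP[e0 e1]]; first by rewrite addr_ge0.
rewrite !hornerE ?mulr0 ?add0r addrK normrM (ger0_norm e0) ler_wpM2r //.
have := HM e; rewrite e0 e1 => /(_ isT) h.
have : `|p.[e]| <= `|p.[0]| + `|p.[e] - p.[0]|.
  by rewrite -[X in `|X|](subrK p.[0]) addrC ler_normD.
have : M * e <= M by rewrite ler_piMr.
lra.
Qed.

Lemma poly_gt0_near0 (s : seq {poly R}) :
  all (fun p => 0 < p.[0]) s ->
  exists2 d, 0 < d & forall e, 0 < e <= d -> all (fun p => 0 < p.[e]) s.
Proof.
elim: s => [|p s IH] /=; first by exists 1.
case/andP => hp /IH [d d0 Hd].
have [M M0 HM] := poly_lipschitz0 p.
have M1 : 0 < M + 1 by lra.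
exists (Num.min d (Num.min 1 (p.[0] / (M + 1)))); first by rewrite !lt_min d0 ltr01 divr_gt0.
move=> e /andP[e0]; rewrite !le_min => /andP[ed /andP[e1 eM]].
rewrite Hd ?e0 ?ed // andbT.
have := HM e; rewrite (ltW e0) e1 => /(_ isT) h.
have := ler_norm (p.[0] - p.[e]); rewrite -normrN opprB.
have : (M + 1) * e <= p.[0] by rewrite -ler_pdivlMl // mulrC.
have : M * e < (M + 1) * e by rewrite ltr_pM2r //; lra.
lra.
Qed.

Lemma ltr_mul_sqrtE (D c K : R) : 0 < K ->
  (D < c * Num.sqrt K) =
    if 0 < c then (D < 0) || (D ^+ 2 < c ^+ 2 * K) else (D < 0) && (c ^+ 2 * K < D ^+ 2).
Proof.
move=> K0; have S0 : 0 < Num.sqrt K by rewrite sqrtr_gt0.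
rewrite -[in RHS](sqr_sqrtr (ltW K0)); move: (Num.sqrt K) S0 => S S0.
case: ifPn => [hc | ]; last rewrite -leNgt => hc; apply/idP/idP.
- case: (ltP D 0) => //= hD h.
  have : 0 < (c * S - D) * (c * S + D) by rewrite mulr_gt0 //; nra.
  nra.
- case/orP => h; first nra.
  case: (ltP D (c * S)) => // h'.
  have : 0 <= (D - c * S) * (D + c * S) by rewrite mulr_ge0 //; nra.
  nra.
- move=> h; have cS : c * S <= 0 by nra.
  have hp : 0 < (- D - c * S) * (- D + c * S) by rewrite mulr_gt0 //; nra.
  apply/andP; split; nra.
- case/andP => h1 h2; case: (ltP D (c * S)) => // h; have cS : c * S <= 0 by nra.
  have : 0 <= (D - c * S) * (- D - c * S) by rewrite mulr_ge0 //; nra.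
  nra.
Qed.

Lemma lt_mul_sqrt_poly_near0 (pD pK : {poly R}) (c : R) :
  0 < pK.[0] -> pD.[0] < c * Num.sqrt pK.[0] ->
  exists2 d, 0 < d & forall e, 0 < e <= d -> 0 < pK.[e] /\ pD.[e] < c * Num.sqrt pK.[e].
Proof.
move=> hK; rewrite ltr_mul_sqrtE // => h0.
have ev : forall x, (c ^+ 2 *: pK - pD * pD).[x] = c ^+ 2 * pK.[x] - pD.[x] ^+ 2.
  by move=> x; rewrite hornerD hornerN hornerZ hornerM expr2.
have [d d0 Hd] : exists2 d, 0 < d & forall e, 0 < e <= d ->
    0 < pK.[e] /\ (if 0 < c then (pD.[e] < 0) || (pD.[e] ^+ 2 < c ^+ 2 * pK.[e])
                   else (pD.[e] < 0) && (c ^+ 2 * pK.[e] < pD.[e] ^+ 2)).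
  move: h0; case: ifP => hc; [case/orP => hD | case/andP => hD hcD].
  - have [|d d0 Hd] := @poly_gt0_near0 [:: pK; - pD].
      by rewrite /= hornerN oppr_gt0 hK hD.
    by exists d => // e /Hd /and3P[h1]; rewrite hornerN oppr_gt0 => ->.
  - have [|d d0 Hd] := @poly_gt0_near0 [:: pK; c ^+ 2 *: pK - pD * pD].
      by rewrite /= ev subr_gt0 hK hD.
    by exists d => // e /Hd /and3P[h1]; rewrite ev subr_gt0 => ->; rewrite orbT.
  - have [|d d0 Hd] := @poly_gt0_near0 [:: pK; - pD; pD * pD - c ^+ 2 *: pK].
      by rewrite /= hornerN oppr_gt0 -opprB hornerN ev oppr_gt0 subr_lt0 hK hD hcD.
    exists d => // e /Hd /and4P[h1]; rewrite hornerN oppr_gt0 -opprB hornerN ev.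
    by rewrite oppr_gt0 subr_lt0 => -> ->.
by exists d => // e /Hd [hKe he]; split; rewrite // ltr_mul_sqrtE.
Qed.

End NearZero.

Section Toward.
Variable R : realType.
Implicit Types (Q X Y Z P a b : R * R) (e r : R).

Lemma cosv_bound a b : 0 < dot a a -> 0 < dot b b -> -1 <= cosv a b <= 1.
Proof. by move=> ha hb; apply: unit_cos_bound (cosv_sinv_sqr ha hb). Qed.

Lemma cot_lt (c s c' s' : R) : c ^+ 2 + s ^+ 2 = 1 -> c' ^+ 2 + s' ^+ 2 = 1 ->
  0 < s -> 0 < s' -> c' * s < c * s' -> c' < c.
Proof.
move=> h h' hs hs' hl; case: (ltP c' c) => // hle; exfalso.
case: (lerP 0 c) => hc.
  have hss : s' <= s by nra.
  nra.
case: (lerP 0 c') => hc'; first nra.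
have hss : s <= s' by nra.
nra.
Qed.

Lemma cosv_lt_cot a b a' b' : 0 < cross a b -> 0 < cross a' b' ->
  dot a' b' * cross a b < dot a b * cross a' b' -> cosv a' b' < cosv a b.
Proof.
move=> h h' hl.
have [ha hb] := cross_gt0_dot_gt0 h; have [ha' hb'] := cross_gt0_dot_gt0 h'.
apply: (cot_lt (cosv_sinv_sqr ha hb) (cosv_sinv_sqr ha' hb')); rewrite ?sinv_gt0E //.
have n0 : 0 < vnorm a * vnorm b by rewrite mulr_gt0 ?vnorm_gt0.
have n0' : 0 < vnorm a' * vnorm b' by rewrite mulr_gt0 ?vnorm_gt0.
rewrite /cosv /sinv !mulf_div [_ * (vnorm a * _)]mulrC.
by rewrite ltr_pM2r // invr_gt0 mulr_gt0.
Qed.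

Lemma dist_leE P Q r : 0 < r -> (dist P Q <= r) = (dot (vsub P Q) (vsub P Q) <= r ^+ 2).
Proof.
move=> r0; have -> : dot (vsub P Q) (vsub P Q) = dot (vsub Q P) (vsub Q P).
  by rewrite /dot /vsub /=; ring.
by rewrite /dist /vnorm -{1}(ger0_norm (ltW r0)) -sqrtr_sqr ler_sqrt // sqr_ge0.
Qed.

Definition toward Q Y e : R * R := (Q.1 + e * (Y.1 - Q.1), Q.2 + e * (Y.2 - Q.2)).

Definition dot_toward_poly Q X Y Z : {poly R} :=
  let u := vsub X Q in let v := vsub Y Q in let w := vsub Z Q in
  (dot w u)%:P - (dot v u + dot w v) *: 'X + (dot v v) *: 'X^2.

Lemma dot_vsub_toward Q X Y Z e :
  dot (vsub Z (toward Q Y e)) (vsub X (toward Q Y e)) = (dot_toward_poly Q X Y Z).[e].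
Proof.
rewrite /dot_toward_poly !(hornerD, hornerN, hornerC, hornerZ, hornerX, hornerXn).
by rewrite /dot /vsub /toward /=; ring.
Qed.

Lemma dot_toward_poly0 Q X Y Z : (dot_toward_poly Q X Y Z).[0] = dot (vsub Z Q) (vsub X Q).
Proof. by rewrite -dot_vsub_toward /toward !mul0r !addr0; case: Q. Qed.

Lemma angle_toward_gt Q X Y e : 0 < e < 1 -> 0 < cross (vsub X Q) (vsub Y Q) ->
  angle Q X Y < angle (toward Q Y e) X Y /\ angle Q X Y < angle (toward Q X e) X Y.
Proof.
case/andP=> e0 e1 hc; set u := vsub X Q in hc *; set v := vsub Y Q in hc *.
have [hu hv] := cross_gt0_dot_gt0 hc.
have e1' : 0 < 1 - e by rewrite subr_gt0.
suff gt Q' : cross (vsub X Q') (vsub Y Q') = (1 - e) * cross u v ->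
    dot (vsub X Q') (vsub Y Q') * cross u v - dot u v * cross (vsub X Q') (vsub Y Q')
      < 0 -> angle Q X Y < angle Q' X Y.
  have shift t : 0 < t -> 0 < (1 - e) * e * t * cross u v by move=> t0; rewrite !mulr_gt0.
  split; apply: gt; rewrite /u /v /cross /dot /vsub /toward /=.
  - by ring.
  - by have := shift _ hv; rewrite /v /dot /cross /vsub /=; lra.
  - by ring.
  - by have := shift _ hu; rewrite /u /dot /cross /vsub /=; lra.
move=> hc' hlt.
have hc'' : 0 < cross (vsub X Q') (vsub Y Q') by rewrite hc' mulr_gt0 // subr_gt0.
have [hx hy] := cross_gt0_dot_gt0 hc''.
rewrite !angleE // acos_ltE ?cosv_bound //.
by apply: cosv_lt_cot => //; rewrite -subr_lt0.
Qed.

Lemma angle_toward_near0 Q X Y Z c : Q <> X -> Q <> Z -> -1 <= c <= 1 ->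
  cosv (vsub Z Q) (vsub X Q) < c ->
  exists2 d, 0 < d & forall e, 0 < e <= d -> acos c < angle (toward Q Y e) Z X.
Proof.
move=> nX nZ hc; have hu := dot_vsub_gt0 nX; have hw := dot_vsub_gt0 nZ.
pose pA := dot_toward_poly Q Z Y Z; pose pB := dot_toward_poly Q X Y X.
have hK : 0 < (pA * pB).[0] by rewrite hornerM !dot_toward_poly0 mulr_gt0.
have n0 : 0 < vnorm (vsub Z Q) * vnorm (vsub X Q) by rewrite mulr_gt0 ?vnorm_gt0.
move=> hlt0; have hlt : (dot_toward_poly Q X Y Z).[0] < c * Num.sqrt (pA * pB).[0].
  by rewrite hornerM !dot_toward_poly0 -vnormM -ltr_pdivrMr.
have [d d0 Hd] := lt_mul_sqrt_poly_near0 hK hlt.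
exists d => // e /Hd []; rewrite hornerM -!dot_vsub_toward.
set w := vsub Z _; set u := vsub X _ => hK' hlt'.
have [hw' hu'] : 0 < dot w w /\ 0 < dot u u.
  by have := dot_ge0 w; have := dot_ge0 u; split; nra.
rewrite angleE // acos_ltE ?cosv_bound // /cosv ltr_pdivrMr ?mulr_gt0 ?vnorm_gt0 //.
by rewrite vnormM.
Qed.

Lemma toward_in_disk_near0 P r Q Y : 0 < r -> in_disk P r Q ->
  ~~ ((dot (vsub P Q) (vsub P Q) == r ^+ 2) && (dot (vsub P Q) (vsub Y Q) <= 0)) ->
  exists2 d, 0 < d & forall e, 0 < e <= d -> in_disk P r (toward Q Y e).
Proof.
rewrite /in_disk => r0; rewrite dist_leE // => hin hnot.
set ds := dot (vsub P Q) (vsub P Q) in hin hnot; set m := dot (vsub P Q) (vsub Y Q) in hnot.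
have dsE : forall e, dot (vsub P (toward Q Y e)) (vsub P (toward Q Y e)) =
    ds - 2 * m * e + dot (vsub Y Q) (vsub Y Q) * e ^+ 2.
  by move=> e; rewrite /ds /m /dot /vsub /toward /=; ring.
pose p : {poly R} := (2 * m)%:P - dot (vsub Y Q) (vsub Y Q) *: 'X.
have pE : forall e, p.[e] = 2 * m - dot (vsub Y Q) (vsub Y Q) * e.
  by move=> e; rewrite /p hornerD hornerN hornerC hornerZ hornerX.
case: (ltP ds (r ^+ 2)) => hlt.
  have [|d d0 Hd] := @poly_gt0_near0 R [:: (r ^+ 2 - ds)%:P + 'X * p].
    by rewrite /= hornerD hornerC hornerM hornerX mul0r addr0 subr_gt0 hlt.
  exists d => // e /Hd; rewrite /= andbT hornerD hornerC hornerM hornerX pE.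
  by rewrite dist_leE // dsE; nra.
have eds : ds = r ^+ 2 by apply/le_anti/andP.
move: hnot; rewrite eds eqxx /= -ltNge => hm.
have [|d d0 Hd] := @poly_gt0_near0 R [:: p]; first by rewrite /= andbT pE mulr0 subr0; lra.
exists d => // e he; move: (Hd e he); rewrite /= andbT pE => hp.
have e0 : 0 < e by case/andP: he.
by rewrite dist_leE // dsE eds; nra.
Qed.

End Toward.

(* Were [Q0] inside the disk, or [Y] on the inner side of the tangent at [Q0],
   moving [Q0] slightly towards [Y] would stay in the disk and increase the
   smallest angle. *)
Lemma MMA_solution_on_circle (R : realType) (P X Y Z Q0 : R * R) (r : R) :
  0 < r -> is_MMA_solution P r X Y Z Q0 -> Q0 <> X -> Q0 <> Z ->
  let u := vsub X Q0 in let v := vsub Y Q0 in let w := vsub Z Q0 in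
  0 < cross u v -> 0 < cross v w -> cosv u v = cosv v w -> cosv w u < cosv u v ->
  dot (vsub P Q0) (vsub P Q0) = r ^+ 2 /\ dot (vsub P Q0) v <= 0.
Proof.
move=> r0 [hin hmax] nX nZ u v w huv hvw ec hlt.
case: (boolP ((dot (vsub P Q0) (vsub P Q0) == r ^+ 2) && (dot (vsub P Q0) v <= 0))).
  by case/andP => /eqP -> ->.
move=> hnot; exfalso.
have [d1 d10 Hd1] := toward_in_disk_near0 r0 hin hnot.
have [hu hv] := cross_gt0_dot_gt0 huv; have [_ hw] := cross_gt0_dot_gt0 hvw.
have [d2 d20 Hd2] := angle_toward_near0 Y nX nZ (cosv_bound hu hv) hlt.
pose e := Num.min (2^-1) (Num.min d1 d2).
have e0 : 0 < e by rewrite !lt_min d10 d20 invr_gt0 ltr0n.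
have [e2 [ed1 ed2]] : e <= 2^-1 /\ e <= d1 /\ e <= d2 by rewrite !ge_min !lexx !orbT.
have e1 : 0 < e < 1 by rewrite e0 (le_lt_trans e2) // invf_lt1 // ltr1n.
have [gtXY _] := angle_toward_gt e1 huv; have [_ gtYZ] := angle_toward_gt e1 hvw.
have gtZX := Hd2 e (ltac:(by rewrite e0 ed2)).
have thXY : angle Q0 X Y = acos (cosv u v) by rewrite angleE.
have thYZ : angle Q0 Y Z = acos (cosv u v) by rewrite angleE // ec.
rewrite thXY in gtXY; rewrite thYZ in gtYZ.
have hQ : acos (cosv u v) < min_angle (toward Q0 Y e) X Y Z by rewrite !lt_min gtXY gtYZ.
have hQ0 : min_angle Q0 X Y Z <= acos (cosv u v) by rewrite ge_min thXY lexx.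
have := hmax _ (Hd1 e (ltac:(by rewrite e0 ed1))).
by rewrite leNgt (le_lt_trans hQ0 hQ).
Qed.

Section Gen.
Variables (R : realType) (S : seq R).

Lemma gen0 : gen S 0.
Proof. by rewrite -(subrr 1); apply: gen_sub; apply: gen_one. Qed.

Lemma genN x : gen S x -> gen S (- x).
Proof. by move=> h; rewrite -sub0r; apply: gen_sub => //; apply: gen0. Qed.

Lemma genD x y : gen S x -> gen S y -> gen S (x + y).
Proof. by move=> hx hy; rewrite -[y]opprK; apply: gen_sub => //; apply: genN. Qed.

Lemma gen_nat n : gen S n%:R.
Proof. by elim: n => [|n IH]; [exact: gen0 | rewrite mulrS; apply: genD => //; apply: gen_one]. Qed.

Lemma genX x n : gen S x -> gen S (x ^+ n).
Proof. by move=> h; elim: n => [|n IH]; [exact: gen_one | rewrite exprS; apply: gen_mul]. Qed.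

Lemma gen_cat T x : gen S x -> gen (S ++ T) x.
Proof.
elim=> [y hy | | y z _ hy _ hz | y z _ hy _ hz | y _ hy].
- by apply: gen_mem; rewrite mem_cat hy.
- exact: gen_one.
- exact: gen_sub.
- exact: gen_mul.
- exact: gen_inv.
Qed.

End Gen.

Ltac gen_field := repeat match goal with
  | |- gen _ (_ + _) => apply: genD
  | |- gen _ (_ - _) => apply: gen_sub
  | |- gen _ (_ * _) => apply: gen_mul
  | |- gen _ (- _) => apply: genN
  | |- gen _ (_ ^-1) => apply: gen_inv
  | |- gen _ (_ ^+ _) => apply: genX
  | |- gen _ (_ %:R) => apply: gen_nat
  | |- gen _ 0 => apply: gen0
  | |- gen _ 1 => apply: gen_one
  | |- gen _ _ => assumption
  end.

Section Quartic.
Variables (R : realType) (S : seq R).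

Definition deg4_root_over (x : R) :=
  exists p : {poly R}, [/\ p != 0, (size p <= 5)%N, (forall i, gen S p`_i) & root p x].

Lemma deg4_root_overP (t0 t1 t2 t3 t4 x : R) :
  gen S t0 -> gen S t1 -> gen S t2 -> gen S t3 -> gen S t4 ->
  [|| t0 != 0, t1 != 0, t2 != 0, t3 != 0 | t4 != 0] ->
  t0 + t1 * x + t2 * x ^+ 2 + t3 * x ^+ 3 + t4 * x ^+ 4 = 0 -> deg4_root_over x.
Proof.
move=> g0 g1 g2 g3 g4 hnz hr; pose t := [:: t0; t1; t2; t3; t4].
exists (\poly_(i < 5) t`_i); split.
- apply: contraTneq hnz => hp.
  have c0 i : (i < 5)%N -> t`_i = 0.
    by move=> hi; have := congr1 (fun p : {poly R} => p`_i) hp; rewrite coef_poly hi coef0.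
  move: (c0 0%N isT) (c0 1%N isT) (c0 2%N isT) (c0 3%N isT) (c0 4%N isT); rewrite /t /= => e0 e1 e2 e3 e4.
  by rewrite e0 e1 e2 e3 e4 eqxx.
- exact: size_poly.
- move=> i; rewrite coef_poly; case: ifP => _; last exact: gen0.
  by case: i => [|[|[|[|[|i]]]]] //=; rewrite nth_nil; exact: gen0.
- by rewrite /root horner_poly !big_ord_recr big_ord0 /= add0r expr0 expr1 mulr1 hr.
Qed.

(* Eliminating [w2] between a conic and a circle: with [D] and [N] as below the
   conic and the circle combine to [w2 * D + N = 0], and substituting
   [w2 = - N / D] into the circle clears to a quartic in [w1]. *)
Lemma conic_circle_deg4 (a b l1 l2 p1 p2 k w1 w2 : R) :
  gen S a -> gen S b -> gen S l1 -> gen S l2 -> gen S p1 -> gen S p2 -> gen S k ->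
  0 < a ^+ 2 + b ^+ 2 -> k != 0 ->
  a * w1 ^+ 2 - a * w2 ^+ 2 + 2 * b * w1 * w2 - l1 * w1 - l2 * w2 = 0 ->
  k * (w1 ^+ 2 + w2 ^+ 2) - 2 * p1 * w1 - 2 * p2 * w2 + 1 = 0 ->
  deg4_root_over w1.
Proof.
move=> ga gb gl1 gl2 gp1 gp2 gk hab hk hG hH.
pose d1 := 2 * k * b; pose d0 := - (k * l2 + 2 * a * p2).
pose n2 := 2 * k * a; pose n1 := - (k * l1 + 2 * a * p1); pose n0 := a.
pose D := d1 * w1 + d0; pose N := n2 * w1 ^+ 2 + n1 * w1 + n0.
have hE : w2 * D + N = 0.
  have -> : w2 * D + N = k * (a * w1 ^+ 2 - a * w2 ^+ 2 + 2 * b * w1 * w2 - l1 * w1 - l2 * w2)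
     + a * (k * (w1 ^+ 2 + w2 ^+ 2) - 2 * p1 * w1 - 2 * p2 * w2 + 1).
    by rewrite /D /N /d1 /d0 /n2 /n1 /n0; ring.
  by rewrite hG hH !mulr0 addr0.
have [hD|hD] := eqVneq D 0.
  have [hd1|hd1] := eqVneq d1 0.
    have hb0 : b = 0.
      by move: hd1; rewrite /d1 => /eqP; rewrite !mulf_eq0 (negbTE hk) pnatr_eq0 /= => /eqP.
    have ha0 : a != 0 by apply: contraTneq hab => ->; rewrite hb0 expr0n /= addr0 ltxx.
    have hN : N = 0 by move: hE; rewrite hD mulr0 add0r.
    apply: (@deg4_root_overP n0 n1 n2 0 0); rewrite /n0 /n1 /n2; gen_field; first by rewrite ha0.
    by rewrite -[RHS]hN /N /n2 /n1 /n0; ring.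
  apply: (@deg4_root_overP d0 d1 0 0 0); rewrite /d0 /d1; gen_field.
    by rewrite -/d1 hd1 orbT.
  by rewrite -[RHS]hD /D /d1 /d0; ring.
pose t4 := k * (d1 ^+ 2 + n2 ^+ 2).
pose t3 := k * (2 * d0 * d1 + 2 * n1 * n2) - 2 * p1 * d1 ^+ 2 + 2 * p2 * n2 * d1.
pose t2 := k * (d0 ^+ 2 + n1 ^+ 2 + 2 * n0 * n2) - 2 * p1 * (2 * d0 * d1)
     + 2 * p2 * (n2 * d0 + n1 * d1) + d1 ^+ 2.
pose t1 := k * (2 * n0 * n1) - 2 * p1 * d0 ^+ 2 + 2 * p2 * (n1 * d0 + n0 * d1) + 2 * d0 * d1.
pose t0 := k * n0 ^+ 2 + 2 * p2 * n0 * d0 + d0 ^+ 2.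
have t4nz : t4 != 0.
  have -> : t4 = 4%:R * k ^+ 3 * (a ^+ 2 + b ^+ 2) by rewrite /t4 /d1 /n2; ring.
  by rewrite !mulf_neq0 ?pnatr_eq0 ?expf_neq0 // gt_eqF.
apply: (@deg4_root_overP t0 t1 t2 t3 t4).
1-5: by rewrite /t0 /t1 /t2 /t3 /t4 /d0 /d1 /n0 /n1 /n2; gen_field.
  by rewrite t4nz !orbT.
have -> : t0 + t1 * w1 + t2 * w1 ^+ 2 + t3 * w1 ^+ 3 + t4 * w1 ^+ 4 =
  D ^+ 2 * (k * (w1 ^+ 2 + w2 ^+ 2) - 2 * p1 * w1 - 2 * p2 * w2 + 1)
  + (w2 * D + N) * (k * (N - w2 * D) + 2 * p2 * D).
  by rewrite /t0 /t1 /t2 /t3 /t4 /D /N; ring.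
by rewrite hH hE mulr0 mul0r addr0.
Qed.

End Quartic.

Lemma circle_coord_sqrt (R : realType) (S : seq R) (p1 p2 k w1 w2 : R) :
  gen S p1 -> gen S p2 -> gen S k -> gen S w1 -> k != 0 ->
  k * (w1 ^+ 2 + w2 ^+ 2) - 2 * p1 * w1 - 2 * p2 * w2 + 1 = 0 ->
  exists2 y, gen S y /\ 0 <= y & gen (rcons S (Num.sqrt y)) w2.
Proof.
move=> gp1 gp2 gk gw1 hk hH.
pose y := p2 ^+ 2 - k * (k * w1 ^+ 2 - 2 * p1 * w1 + 1).
have hy : y = (k * w2 - p2) ^+ 2.
  have -> : y = (k * w2 - p2) ^+ 2 - k * (k * (w1 ^+ 2 + w2 ^+ 2) - 2 * p1 * w1 - 2 * p2 * w2 + 1).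
    by rewrite /y; ring.
  by rewrite hH mulr0 subr0.
exists y; first by split; [rewrite /y; gen_field | rewrite hy sqr_ge0].
have gs : gen (rcons S (Num.sqrt y)) (Num.sqrt y) by apply: gen_mem; rewrite mem_rcons mem_head.
rewrite -cats1 in gs *; have gp2' := gen_cat [:: Num.sqrt y] gp2.
have gk' := gen_cat [:: Num.sqrt y] gk.
have [hs|hs] := lerP 0 (k * w2 - p2).
  have -> : w2 = (p2 + Num.sqrt y) / k by rewrite hy sqrtr_sqr ger0_norm //; field.
  gen_field.
have -> : w2 = (p2 - Num.sqrt y) / k by rewrite hy sqrtr_sqr ltr0_norm //; field.
gen_field.
Qed.

Lemma conic_circle_computable (R : realType) (S : seq R) (a b l1 l2 p1 p2 k w1 w2 : R) :
  gen S a -> gen S b -> gen S l1 -> gen S l2 -> gen S p1 -> gen S p2 -> gen S k ->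
  0 < a ^+ 2 + b ^+ 2 -> k != 0 ->
  a * w1 ^+ 2 - a * w2 ^+ 2 + 2 * b * w1 * w2 - l1 * w1 - l2 * w2 = 0 ->
  k * (w1 ^+ 2 + w2 ^+ 2) - 2 * p1 * w1 - 2 * p2 * w2 + 1 = 0 ->
  exists xs, [/\ tower S xs true, gen (S ++ xs) w1 & gen (S ++ xs) w2].
Proof.
move=> ga gb gl1 gl2 gp1 gp2 gk hab hk hG hH.
have [p [pn0 psz pg pr]] := conic_circle_deg4 ga gb gl1 gl2 gp1 gp2 gk hab hk hG hH.
have gw1 : gen (rcons S w1) w1 by apply: gen_mem; rewrite mem_rcons mem_head.
have ext x : gen S x -> gen (rcons S w1) x by rewrite -cats1; apply: gen_cat.
have [y [gy y0] gw2] := circle_coord_sqrt (ext _ gp1) (ext _ gp2) (ext _ gk) gw1 hk hH.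
exists [:: w1; Num.sqrt y]; split.
- by right; split=> //; split; [exists p | left; split=> //; exists y].
- by apply: gen_mem; rewrite mem_cat mem_head orbT.
- by rewrite -cat_rcons cats1.
Qed.

Section Inversion.
Variable R : realType.
Implicit Types (P X Y Z Q : R * R) (r : R).

Definition invert Y Q : R * R :=
  let q := vsub Q Y in (q.1 / dot q q, q.2 / dot q q).

Lemma dot_vsub_neq0 Y Q : Y <> Q -> dot (vsub Q Y) (vsub Q Y) != 0.
Proof. by move=> nQ; rewrite gt_eqF // dot_vsub_gt0. Qed.

Lemma invertK Y Q : Y <> Q -> let w := invert Y Q in
  Q.1 = Y.1 + w.1 / (w.1 ^+ 2 + w.2 ^+ 2) /\ Q.2 = Y.2 + w.2 / (w.1 ^+ 2 + w.2 ^+ 2).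
Proof. by move=> /dot_vsub_neq0; rewrite /invert /dot /vsub /= => nq; split; field. Qed.

Lemma invert_equal_angles X Y Z Q : Y <> Q ->
  dot (vsub X Q) (vsub Y Q) * cross (vsub Y Q) (vsub Z Q) =
    dot (vsub Y Q) (vsub Z Q) * cross (vsub X Q) (vsub Y Q) ->
  let a := vsub X Y in let c := vsub Z Y in let w := invert Y Q in
  let k := - (a.1 * c.2 + a.2 * c.1) in let b := a.1 * c.1 - a.2 * c.2 in
  let l1 := - (a.2 + c.2) in let l2 := a.1 + c.1 in
  k * w.1 ^+ 2 - k * w.2 ^+ 2 + 2 * b * w.1 * w.2 - l1 * w.1 - l2 * w.2 = 0.
Proof.
move=> /dot_vsub_neq0 nq hK a c w k b l1 l2.
apply: (mulIf (expf_neq0 2 nq)); rewrite mul0r.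
transitivity (- (dot (vsub X Q) (vsub Y Q) * cross (vsub Y Q) (vsub Z Q) -
    dot (vsub Y Q) (vsub Z Q) * cross (vsub X Q) (vsub Y Q))); last by rewrite hK subrr oppr0.
move: nq; rewrite /w /invert /k /b /l1 /l2 /a /c /dot /cross /vsub /= => nq.
by field.
Qed.

Lemma invert_circle P Y Q r : Y <> Q -> dot (vsub P Q) (vsub P Q) = r ^+ 2 ->
  let p := vsub P Y in let k := dot p p - r ^+ 2 in let w := invert Y Q in
  k * (w.1 ^+ 2 + w.2 ^+ 2) - 2 * p.1 * w.1 - 2 * p.2 * w.2 + 1 = 0.
Proof.
move=> /dot_vsub_neq0 nq hd p k w.
apply: (mulIf nq); rewrite mul0r.
transitivity (dot (vsub P Q) (vsub P Q) - r ^+ 2); last by rewrite hd subrr.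
move: nq; rewrite /w /invert /k /p /dot /vsub /= => nq.
by field.
Qed.

End Inversion.

Lemma equal_angles_on_circle_computable (R : realType) (S : seq R) (X Y Z P Q0 : R * R) (r : R) :
  {subset [:: P.1; P.2; X.1; X.2; Y.1; Y.2; Z.1; Z.2; r] <= S} ->
  Y <> X -> Y <> Z -> Y <> Q0 -> dot (vsub P Y) (vsub P Y) != r ^+ 2 ->
  dot (vsub X Q0) (vsub Y Q0) * cross (vsub Y Q0) (vsub Z Q0) =
    dot (vsub Y Q0) (vsub Z Q0) * cross (vsub X Q0) (vsub Y Q0) ->
  dot (vsub P Q0) (vsub P Q0) = r ^+ 2 ->
  computable_deg4 S Q0.
Proof.
move=> hS nX nZ nQ hk hK hd.
have gS x : x \in [:: P.1; P.2; X.1; X.2; Y.1; Y.2; Z.1; Z.2; r] -> gen S x.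
  by move=> hx; apply/gen_mem/hS.
have [gp1 gp2] : gen S P.1 /\ gen S P.2 by split; apply: gS; rewrite !inE eqxx ?orbT.
have [gx1 gx2] : gen S X.1 /\ gen S X.2 by split; apply: gS; rewrite !inE eqxx ?orbT.
have [gy1 gy2] : gen S Y.1 /\ gen S Y.2 by split; apply: gS; rewrite !inE eqxx ?orbT.
have [gz1 gz2] : gen S Z.1 /\ gen S Z.2 by split; apply: gS; rewrite !inE eqxx ?orbT.
have gr : gen S r by apply: gS; rewrite !inE eqxx ?orbT.
have hab : 0 < (- ((vsub X Y).1 * (vsub Z Y).2 + (vsub X Y).2 * (vsub Z Y).1)) ^+ 2 +
    ((vsub X Y).1 * (vsub Z Y).1 - (vsub X Y).2 * (vsub Z Y).2) ^+ 2.
  have := mulr_gt0 (dot_vsub_gt0 nX) (dot_vsub_gt0 nZ).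
  by rewrite /dot /vsub /=; congr (0 < _); ring.
have hk0 : dot (vsub P Y) (vsub P Y) - r ^+ 2 != 0 by rewrite subr_eq0.
have [xs [ht g1 g2]] : exists xs, [/\ tower S xs true, gen (S ++ xs) (invert Y Q0).1
    & gen (S ++ xs) (invert Y Q0).2].
  by apply: (conic_circle_computable _ _ _ _ _ _ _ hab hk0 (invert_equal_angles nQ hK)
    (invert_circle nQ hd)); rewrite /dot /vsub /=; gen_field.
have [eQ1 eQ2] := invertK nQ; set w := invert Y Q0 in eQ1 eQ2 g1 g2.
exists xs; split => //; [rewrite eQ1 | rewrite eQ2].
- by have gy := gen_cat xs gy1; gen_field.
- by have gy := gen_cat xs gy2; gen_field.
Qed.

Lemma two_smallest_computable (R : realType) (S : seq R) (P X Y Z Q0 : R * R) (r : R) :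
  0 < r -> is_MMA_solution P r X Y Z Q0 -> Q0 <> X -> Q0 <> Y -> Q0 <> Z ->
  {subset [:: P.1; P.2; X.1; X.2; Y.1; Y.2; Z.1; Z.2; r] <= S} ->
  ccw_angle Q0 X Y = ccw_angle Q0 Y Z -> ccw_angle Q0 X Y < ccw_angle Q0 Z X ->
  ccw_angle Q0 X Y + ccw_angle Q0 Y Z + ccw_angle Q0 Z X = 2 * pi \/
    ccw_angle Q0 X Z + ccw_angle Q0 Z Y + ccw_angle Q0 Y X != 2 * pi ->
  computable_deg4 S Q0.
Proof.
move=> r0 hsol nX nY nZ hS e lt hsum.
have [huv hvw ec es hlt] := two_equal_ccw_angles nX nY nZ e lt hsum.
have [hd hm] := MMA_solution_on_circle r0 hsol nX nZ huv hvw ec hlt.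
have [_ hv] := cross_gt0_dot_gt0 huv.
apply: (equal_angles_on_circle_computable hS); last exact: hd.
- by move=> eYX; move: huv; rewrite eYX /cross mulrC subrr ltxx.
- by move=> eYZ; move: hvw; rewrite -eYZ /cross mulrC subrr ltxx.
- by move=> /esym.
- rewrite gt_eqF //.
  have -> : dot (vsub P Y) (vsub P Y) = dot (vsub P Q0) (vsub P Q0)
      - 2 * dot (vsub P Q0) (vsub Y Q0) + dot (vsub Y Q0) (vsub Y Q0).
    by rewrite /dot /vsub /=; ring.
  by rewrite hd; clear -hm hv; lra.
- have [hu _] := cross_gt0_dot_gt0 huv; have [_ hw] := cross_gt0_dot_gt0 hvw.
  rewrite (dot_cosv hu hv) (dot_cosv hv hw) (cross_sinv hu hv) (cross_sinv hv hw) ec es.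
  ring.
Qed.

Section Relabel.
Variables (R : realType) (P A B C Q0 : R * R) (r : R).

Lemma is_MMA_solution_rot : is_MMA_solution P r A B C Q0 -> is_MMA_solution P r B C A Q0.
Proof.
have rot Q : min_angle Q B C A = min_angle Q A B C.
  by rewrite /min_angle minA minC.
by case=> hin hmax; split=> // Q /hmax; rewrite !rot.
Qed.

Lemma is_MMA_solution_rev : is_MMA_solution P r A B C Q0 -> is_MMA_solution P r A C B Q0.
Proof.
have rev Q : min_angle Q A C B = min_angle Q A B C.
  by rewrite /min_angle (angleC Q A C) (angleC Q C B) (angleC Q B A) minC (minC (angle Q B C)) -minA.
by case=> hin hmax; split=> // Q /hmax; rewrite !rev.
Qed.

Lemma relabel_coords_subset (X Y Z : R * R) :
  X \in [:: A; B; C] -> Y \in [:: A; B; C] -> Z \in [:: A; B; C] ->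
  {subset [:: P.1; P.2; X.1; X.2; Y.1; Y.2; Z.1; Z.2; r] <=
    [:: P.1; P.2; A.1; A.2; B.1; B.2; C.1; C.2; r]}.
Proof.
have coord V : V \in [:: A; B; C] ->
    (V.1 \in [:: P.1; P.2; A.1; A.2; B.1; B.2; C.1; C.2; r]) &&
    (V.2 \in [:: P.1; P.2; A.1; A.2; B.1; B.2; C.1; C.2; r]).
  by rewrite !inE => /or3P[]/eqP->; rewrite !eqxx !orbT.
move=> /coord/andP[x1 x2] /coord/andP[y1 y2] /coord/andP[z1 z2]; apply/allP.
by rewrite /= x1 x2 y1 y2 z1 z2 !inE !eqxx !orbT.
Qed.

End Relabel.

Theorem theorem1 (R : realType) (P A B C Pstar : R * R) (r : R) :
  0 < r ->
  is_MMA_solution P r A B C Pstar ->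
  exactly_two_smallest Pstar A B C ->
  computable_deg4 [:: P.1; P.2; A.1; A.2; B.1; B.2; C.1; C.2; r] Pstar.
Proof.
move=> r0 hsol [nA nB nC]; rewrite /consecutive_angles.
have hsol' := is_MMA_solution_rev hsol.
case: ifP => [/eqP hsum | /negbT hsum] [[e lt] | [[e lt] | [e lt]]];
  [ apply: (two_smallest_computable r0 hsol nA nB nC _ e lt)
  | apply: (two_smallest_computable r0 (is_MMA_solution_rot hsol) nB nC nA _ e lt)
  | apply: (two_smallest_computable r0 (is_MMA_solution_rot (is_MMA_solution_rot hsol))
      nC nA nB _ e lt)
  | apply: (two_smallest_computable r0 hsol' nA nC nB _ e lt)
  | apply: (two_smallest_computable r0 (is_MMA_solution_rot hsol') nC nB nA _ e lt)
  | apply: (two_smallest_computable r0 (is_MMA_solution_rot (is_MMA_solution_rot hsol'))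
      nB nA nC _ e lt) ];
  try by apply: relabel_coords_subset; rewrite !inE eqxx ?orbT.
all: first [left; rewrite -hsum | right; apply: contra_neq hsum => <-]; ring.
Qed.
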